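(* Let $p$ be an odd prime and let $n,s$ be positive integers such that $2n/s\geq 3$ is an odd integer; put $q=p^n$, $d=p^s$. Fix $\mu\in\mathbb{F}_{q^2}\setminus\mathbb{F}_q$ such that $\mu^d=u_1+u_2\mu$ with $u_1,u_2\in\mathbb{F}_q$ and $u_2$ a $(d-1)$-th power in $\mathbb{F}_{q^2}$, and write $\mu^{d+1}=w_1+w_2\mu$ with $w_1,w_2\in\mathbb{F}_q$. Let \[ J=\{(a^d+a,\,x_1+x_2\mu): a,x_1\in\mathbb{F}_q,\ x_2\in\mathbb{F}_q^*\},\qquad K=\bigcup_{\beta\in\mathbb{F}_q}\phi_{(\beta\mu)^d+\beta\mu}(J). \] If $X=(\mathbb{F}_{q^2}\times\mathbb{F}_{q^2})\setminus K$, then \[ X=\{((a+\beta\mu)^d+(a+\beta\mu),\ t_1+(a^d\beta+a\beta^du_2+\beta^{d+1}w_2)\mu): a,\beta,t_1\in\mathbb{F}_q\}. \]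
   Context: The map $x\mapsto x^d+x$ is a bijection of $\mathbb{F}_{q^2}$. For $k=\alpha^d+\alpha\in\mathbb{F}_{q^2}$ ($\alpha\in\mathbb{F}_{q^2}$), $\phi_k:\mathbb{F}_{q^2}\times\mathbb{F}_{q^2}\to\mathbb{F}_{q^2}\times\mathbb{F}_{q^2}$ is the map $(a^d+a,x)\mapsto(a^d+a+k,\ x+a^d\alpha+a\alpha^d+\alpha^{d+1})$. $\mathbb{F}_q$ is the subfield of $\mathbb{F}_{q^2}$ of order $q$. *)

From HB Require Import structures.
From mathcomp Require Import all_boot all_order all_algebra all_field.
Set Implicit Arguments. Unset Strict Implicit. Unset Printing Implicit Defensive.
Import GRing.Theory.
Local Open Scope ring_scope.

Definition subFq (F : finFieldType) (q : nat) : {set F} := [set x : F | x ^+ q == x].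

(* The map T(x) = x^d + x, and a chosen preimage (the genuine inverse when T is
   a bijection, which is the case under the hypotheses of lemma10). *)
Definition Tmap (F : finFieldType) (d : nat) (x : F) : F := x ^+ d + x.
Definition Tinv (F : finFieldType) (d : nat) (k : F) : F :=
  odflt 0 [pick y : F | Tmap d y == k].

(* phi_k : (a^d+a, x) |-> (a^d+a+k, x + a^d alpha + a alpha^d + alpha^(d+1)),
   where k = alpha^d + alpha. *)
Definition phi (F : finFieldType) (d : nat) (k : F) (P : F * F) : F * F :=
  let alpha := Tinv d k in
  let a := Tinv d P.1 in
  (P.1 + k, P.2 + a ^+ d * alpha + a * alpha ^+ d + alpha ^+ d.+1).

Definition Jset (F : finFieldType) (q d : nat) (mu : F) : {set F * F} :=
  [set P : F * F | [exists a in subFq F q, exists x1 in subFq F q,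
     exists x2 in subFq F q, (x2 != 0) && (P == (Tmap d a, x1 + x2 * mu))]].

Definition Kset (F : finFieldType) (q d : nat) (mu : F) : {set F * F} :=
  [set P : F * F | [exists beta in subFq F q, exists Q in Jset q d mu,
     P == phi d (Tmap d (beta * mu)) Q]].

From HB Require Import structures.
From mathcomp Require Import all_boot all_order all_algebra all_field.
From mathcomp Require Import ring.
Set Implicit Arguments. Unset Strict Implicit. Unset Printing Implicit Defensive.
Import GRing.Theory.
Local Open Scope ring_scope.

(* Write d = p^s and m = 2n/s, so that #|F| = d^m with m odd.  If x^d + x = 0
   then iterating x |-> x^d m times gives x = -x, hence x = 0 in odd
   characteristic: T(x) = x^d + x is an additive bijection, and
   phi_(T alpha) (T a, x) = (T (a + alpha), x + a^d alpha + a alpha^d + alpha^(d+1)).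
   In the F_q-basis (1, mu) of F, the image of J under phi_(T (beta mu)) is
   therefore the set of points (T (a + beta mu), y1 + y2 mu) whose mu-coordinate
   y2 differs from the mu-coordinate c(a, beta) of that cocycle at alpha = beta mu.
   Since T (a + beta mu) determines (a, beta), K is exactly the set of points with
   y2 <> c(a, beta), and its complement is the set of points with y2 = c(a, beta). *)

Lemma pchar_natX (R : nzSemiRingType) (p k : nat) :
  p \in [pchar R] -> [pchar R].-nat (p ^ k)%N.
Proof.
move=> chp; rewrite pnatX (eq_pnat _ (pcharf_eq chp)) pnat_id //.
exact: pcharf_prime chp.
Qed.

Lemma two_notin_pchar (R : nzSemiRingType) (p : nat) :
  p \in [pchar R] -> odd p -> 2 \notin [pchar R].
Proof. by move=> chp; rewrite (pcharf_eq chp) inE; case: eqP => // <-. Qed.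

Section TraceMap.
Variables (F : finFieldType) (d m : nat).
Hypotheses (dF : [pchar F].-nat d) (m_odd : odd m) (cardF : #|F| = (d ^ m)%N).
Hypothesis char_neq2 : 2 \notin [pchar F].

Lemma Tmap_add (x y : F) : Tmap d (x + y) = Tmap d x + Tmap d y.
Proof. by rewrite /Tmap exprDn_pchar // addrACA. Qed.

Lemma Tmap_opp (x : F) : Tmap d (- x) = - Tmap d x.
Proof. by rewrite /Tmap exprNn_pchar // opprD. Qed.

Lemma Tmap_eq0 (x : F) : Tmap d x = 0 -> x = 0.
Proof.
move/eqP; rewrite addr_eq0 => /eqP xdN.
have frob_iter k : x ^+ (d ^ k) = (-1) ^+ k * x.
  elim: k => [|k IHk]; first by rewrite expr0 mul1r.
  by rewrite expnS exprM xdN exprNn_pchar ?pnatX ?dF // IHk exprS mulNr mul1r mulNr.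
have : x = - x by rewrite -[LHS](expf_card x) cardF frob_iter -signr_odd m_odd mulN1r.
move/eqP; rewrite -subr_eq0 opprK -mulr2n -mulr_natl mulf_eq0 => /orP[two0|/eqP//].
by move: char_neq2; rewrite inE /= two0.
Qed.

Lemma Tmap_inj : injective (Tmap (F := F) d).
Proof.
move=> x y Txy; apply/eqP; rewrite -subr_eq0; apply/eqP/Tmap_eq0.
by rewrite Tmap_add Tmap_opp Txy subrr.
Qed.

Lemma Tinv_Tmap (x : F) : Tinv d (Tmap d x) = x.
Proof.
by rewrite /Tinv; case: pickP => [y /eqP/Tmap_inj//|/(_ x)]; rewrite eqxx.
Qed.

Lemma Tmap_Tinv (k : F) : Tmap d (Tinv d k) = k.
Proof.
have [g _ gK] := injF_bij Tmap_inj.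
by rewrite -[k]gK Tinv_Tmap.
Qed.

Definition Tcocycle (a alpha : F) : F :=
  a ^+ d * alpha + a * alpha ^+ d + alpha ^+ d.+1.

Lemma phi_Tmap (a alpha x : F) :
  phi d (Tmap d alpha) (Tmap d a, x) = (Tmap d (a + alpha), x + Tcocycle a alpha).
Proof. by rewrite /phi /= !Tinv_Tmap Tmap_add /Tcocycle !addrA. Qed.

End TraceMap.

Section QuadraticExtension.
Variables (F : finFieldType) (q : nat).
Hypothesis qF : [pchar F].-nat q.

Lemma subFq_divring_closed : divring_closed (subFq F q).
Proof.
split => [|x y|x y]; rewrite !inE ?expr1n //.
- by rewrite exprDn_pchar // exprNn_pchar // => /eqP-> /eqP->.
- by rewrite exprMn exprVn => /eqP-> /eqP->.
Qed.

HB.instance Definition _ :=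
  GRing.isDivringClosed.Build F (pred_of_set (subFq F q)) subFq_divring_closed.

Hypothesis cardF : #|F| = (q ^ 2)%N.

Lemma subFq_frobK (x : F) : x ^+ q ^+ q = x.
Proof. by rewrite -exprM mulnn -cardF expf_card. Qed.

Variable mu : F.
Hypothesis mu_notin : mu \notin subFq F q.

Lemma frobB (x y : F) : (x - y) ^+ q = x ^+ q - y ^+ q.
Proof. by rewrite exprDn_pchar // exprNn_pchar. Qed.

Lemma subFq_decomp (z : F) :
  exists a b, [/\ a \in subFq F q, b \in subFq F q & z = a + b * mu].
Proof.
have mu_frob : mu ^+ q - mu != 0.
  by rewrite subr_eq0; apply: contra mu_notin; rewrite inE.
(* [b] is forced by applying the Frobenius to [z = a + b * mu]. *)
pose b := (z ^+ q - z) / (mu ^+ q - mu).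
have bS : b \in subFq F q.
  rewrite inE /b expr_div_n !frobB !subFq_frobK.
  by rewrite -opprB -[mu - _]opprB invrN mulrNN.
exists (z - b * mu), b; split; rewrite ?subrK //.
have bq : b ^+ q = b by apply/eqP; move: bS; rewrite inE.
rewrite inE frobB exprMn bq.
by apply/eqP; rewrite /b; field.
Qed.

Lemma subFq_decomp_eq (a b a' b' : F) :
    a \in subFq F q -> b \in subFq F q -> a' \in subFq F q -> b' \in subFq F q ->
  (a + b * mu == a' + b' * mu) = (a == a') && (b == b').
Proof.
move=> aS bS a'S b'S; apply/eqP/andP => [E|[/eqP-> /eqP->]//].
have eq_b : b = b'.
  apply/eqP; apply: contraNT mu_notin; rewrite -subr_eq0 => nb.
  have -> : mu = (a' - a) / (b - b').
    apply: (mulIf nb); rewrite divfK // mulrC mulrBl.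
    by apply/eqP; rewrite subr_eq addrAC -E [a + _]addrC addrK.
  by rewrite rpredM ?rpredV ?rpredB.
by move: E; rewrite eq_b => /addIr->.
Qed.

Section ComplementOfK.
Variables (d m : nat) (u1 u2 w1 w2 : F).
Hypotheses (dF : [pchar F].-nat d) (cardd : #|F| = (d ^ m)%N).
Hypotheses (m_odd : odd m) (char_neq2 : 2 \notin [pchar F]).
Hypotheses (u1S : u1 \in subFq F q) (u2S : u2 \in subFq F q).
Hypotheses (w1S : w1 \in subFq F q) (w2S : w2 \in subFq F q).
Hypotheses (mu_d : mu ^+ d = u1 + u2 * mu) (mu_dS : mu ^+ d.+1 = w1 + w2 * mu).

Local Notation T := (Tmap d).

Definition cocycle_one (a b : F) : F := a * b ^+ d * u1 + b ^+ d.+1 * w1.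
Definition cocycle_mu (a b : F) : F :=
  a ^+ d * b + a * b ^+ d * u2 + b ^+ d.+1 * w2.

Lemma cocycle_one_subFq a b :
  a \in subFq F q -> b \in subFq F q -> cocycle_one a b \in subFq F q.
Proof. by move=> aS bS; rewrite rpredD ?rpredM ?rpredX. Qed.

Lemma cocycle_mu_subFq a b :
  a \in subFq F q -> b \in subFq F q -> cocycle_mu a b \in subFq F q.
Proof. by move=> aS bS; rewrite !rpredD ?rpredM ?rpredX. Qed.

Lemma phi_Tmap_mu (a b x1 x2 : F) :
  phi d (T (b * mu)) (T a, x1 + x2 * mu) =
  (T (a + b * mu), (x1 + cocycle_one a b) + (x2 + cocycle_mu a b) * mu).
Proof.
rewrite (phi_Tmap dF m_odd cardd char_neq2); congr pair.
by rewrite /Tcocycle /cocycle_one /cocycle_mu !exprMn mu_d mu_dS; ring.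
Qed.

Let Tinj := Tmap_inj dF m_odd cardd char_neq2.

Lemma mem_Kset a b y1 y2 :
    a \in subFq F q -> b \in subFq F q -> y1 \in subFq F q -> y2 \in subFq F q ->
  ((T (a + b * mu), y1 + y2 * mu) \in Kset q d mu) = (y2 != cocycle_mu a b).
Proof.
move=> aS bS y1S y2S; rewrite inE; apply/existsP/idP => [|y2_neq].
  case=> b' /andP[b'S /existsP[Q /andP[]]].
  rewrite inE => /existsP[a' /andP[a'S /existsP[x1 /andP[x1S]]]].
  case/existsP=> x2 /andP[x2S /andP[x2_neq0 /eqP->]].
  have y1'S : x1 + cocycle_one a' b' \in subFq F q.
    exact: rpredD x1S (cocycle_one_subFq a'S b'S).
  have y2'S : x2 + cocycle_mu a' b' \in subFq F q.
    exact: rpredD x2S (cocycle_mu_subFq a'S b'S).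
  rewrite phi_Tmap_mu xpair_eqE (inj_eq Tinj) !subFq_decomp_eq //.
  by case/andP=> /andP[/eqP<- /eqP<-] /andP[_ /eqP->]; rewrite -subr_eq0 addrK.
exists b; rewrite bS; apply/existsP.
exists (T a, (y1 - cocycle_one a b) + (y2 - cocycle_mu a b) * mu).
rewrite phi_Tmap_mu !subrK eqxx andbT inE; apply/existsP; exists a; rewrite aS.
apply/existsP; exists (y1 - cocycle_one a b); rewrite rpredB ?cocycle_one_subFq //.
apply/existsP; exists (y2 - cocycle_mu a b).
by rewrite rpredB ?cocycle_mu_subFq // subr_eq0 y2_neq eqxx.
Qed.

Definition Xset : {set F * F} :=
  [set P : F * F | [exists a in subFq F q, exists beta in subFq F q,
     exists t1 in subFq F q,
     P == (T (a + beta * mu), t1 + cocycle_mu a beta * mu)]].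

Lemma mem_Xset a b y1 y2 :
    a \in subFq F q -> b \in subFq F q -> y1 \in subFq F q -> y2 \in subFq F q ->
  ((T (a + b * mu), y1 + y2 * mu) \in Xset) = (y2 == cocycle_mu a b).
Proof.
move=> aS bS y1S y2S; rewrite inE; apply/existsP/eqP => [|y2E].
  case=> a' /andP[a'S /existsP[b' /andP[b'S /existsP[t1 /andP[t1S]]]]].
  have c'S := cocycle_mu_subFq a'S b'S.
  rewrite xpair_eqE (inj_eq Tinj) !subFq_decomp_eq //.
  by case/and3P=> /andP[/eqP<- /eqP<-] _ /eqP.
exists a; rewrite aS; apply/existsP; exists b; rewrite bS.
by apply/existsP; exists y1; rewrite y1S y2E eqxx.
Qed.

Lemma Kset_compl : ~: Kset q d mu = Xset.
Proof.
apply/setP=> -[z1 z2]; rewrite -[z1](Tmap_Tinv dF m_odd cardd char_neq2).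
have [a [b [aS bS ->]]] := subFq_decomp (Tinv d z1).
have [y1 [y2 [y1S y2S ->]]] := subFq_decomp z2.
by rewrite in_setC mem_Kset // mem_Xset // negbK.
Qed.

End ComplementOfK.

End QuadraticExtension.

Theorem lemma10 (F : finFieldType) (p n s : nat) (mu u1 u2 w1 w2 : F) :
  prime p -> odd p -> p \in [pchar F] ->
  (0 < n)%N -> (0 < s)%N ->
  (s %| 2 * n)%N -> odd ((2 * n) %/ s) -> (3 <= (2 * n) %/ s)%N ->
  #|F| = ((p ^ n) ^ 2)%N ->
  mu \notin subFq F (p ^ n) ->
  u1 \in subFq F (p ^ n) -> u2 \in subFq F (p ^ n) ->
  mu ^+ (p ^ s) = u1 + u2 * mu ->
  (exists v : F, u2 = v ^+ (p ^ s).-1) ->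
  w1 \in subFq F (p ^ n) -> w2 \in subFq F (p ^ n) ->
  mu ^+ (p ^ s).+1 = w1 + w2 * mu ->
  ~: Kset (p ^ n) (p ^ s) mu =
  [set P : F * F | [exists a in subFq F (p ^ n), exists beta in subFq F (p ^ n),
     exists t1 in subFq F (p ^ n),
     P == (Tmap (p ^ s) (a + beta * mu),
           t1 + (a ^+ (p ^ s) * beta + a * beta ^+ (p ^ s) * u2
                 + beta ^+ (p ^ s).+1 * w2) * mu)]].
Proof.
move=> _ p_odd chp _ _ s_dvd m_odd _ cardF mu_notin u1S u2S mu_d _ w1S w2S mu_dS.
have cardd : #|F| = ((p ^ s) ^ ((2 * n) %/ s))%N.
  by rewrite cardF -!expnM [(s * _)%N]mulnC divnK // mulnC.
exact: (Kset_compl (pchar_natX n chp) cardF mu_notin (pchar_natX s chp) cardd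
  m_odd (two_notin_pchar chp p_odd) u1S u2S w1S w2S mu_d mu_dS).
Qed.
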